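(* In the non-binary voting game (with a sequence of instances sharing the same parameters), there exists a constant $N_\mu>0$ such that for all $N>N_\mu$, the fraction of friendly agents satisfies $N_F/N<\mu$ and the fraction of unfriendly agents satisfies $N_U/N<1-\mu$.
   Context: Non-binary voting game. $N$ agents vote for $\mathbf{A}$ or $\mathbf{R}$; world states $\{1,\dots,\mathcal{W}\}$; threshold $\mu\in(0,1)$. Agent $n$ has utility $v_n$ on states $\times\{\mathbf{A},\mathbf{R}\}$ with $v_n(w,\mathbf{A})$ strictly increasing, $v_n(w,\mathbf{R})$ strictly decreasing in $w$, and $v_n(w,\mathbf{A})\ne v_n(w,\mathbf{R})$. Constants $\alpha^{\mathbf{A}}_w$, $\alpha^{\mathbf{R}}_w=1-\alpha^{\mathbf{A}}_w$ independent of $N$: exactly $\lfloor\alpha^{\mathbf{R}}_wN\rfloor$ agents prefer $\mathbf{R}$ in state $w$, the other $N-\lfloor\alpha^{\mathbf{R}}_wN\rfloor$ prefer $\mathbf{A}$; $\alpha^{\mathbf{A}}_w\ne\mu$ for all $w$. $\mathcal{L}=\{w:\alpha^{\mathbf{A}}_w<\mu\}$ and $\mathcal{H}=\{w:\alpha^{\mathbf{A}}_w>\mu\}$ are both nonempty. For agent $n$, $\mathcal{L}_n=\{w:v_n(w,\mathbf{R})>v_n(w,\mathbf{A})\}$, $\mathcal{H}_n=\{w:v_n(w,\mathbf{A})>v_n(w,\mathbf{R})\}$; $n$ is friendly if $\mathcal{L}\cap\mathcal{H}_n\ne\emptyset$, unfriendly if $\mathcal{H}\cap\mathcal{L}_n\ne\emptyset$.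 $N_F$, $N_U$ denote the numbers of friendly and unfriendly agents in the instance with $N$ agents. *)

From mathcomp Require Import all_boot all_order all_algebra.
From mathcomp Require Import reals.
Set Implicit Arguments. Unset Strict Implicit. Unset Printing Implicit Defensive.
Import Order.TTheory GRing.Theory Num.Theory.
Local Open Scope ring_scope.

Inductive outcome := oA | oR.

Section Voting.
Variables (R : realType) (W : nat).
(* World states {1,...,W} are represented by 'I_W (0,...,W-1), same order. *)
Variables (alphaA : 'I_W -> R) (mu : R).

Definition alphaR (w : 'I_W) : R := 1 - alphaA w.

Definition utility_profile (N : nat) := 'I_N -> 'I_W -> outcome -> R.

Definition prefersR N (v : utility_profile N) (n : 'I_N) (w : 'I_W) : bool :=
  v n w oA < v n w oR.
Definition prefersA N (v : utility_profile N) (n : 'I_N) (w : 'I_W) : bool :=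
  v n w oR < v n w oA.

Definition valid_instance N (v : utility_profile N) : Prop :=
  [/\ (forall n (w1 w2 : 'I_W), (w1 < w2)%N -> v n w1 oA < v n w2 oA),
      (forall n (w1 w2 : 'I_W), (w1 < w2)%N -> v n w2 oR < v n w1 oR),
      (forall n w, v n w oA != v n w oR),
      (forall w, (#|[set n | prefersR v n w]| : int) = Num.floor (alphaR w * N%:R)) &
      (forall w, (#|[set n | prefersA v n w]| : int) = N%:Z - Num.floor (alphaR w * N%:R))].

Definition Lset : pred 'I_W := fun w => alphaA w < mu.
Definition Hset : pred 'I_W := fun w => mu < alphaA w.

Definition friendly N (v : utility_profile N) (n : 'I_N) : bool :=
  [exists w, Lset w && prefersA v n w].
Definition unfriendly N (v : utility_profile N) (n : 'I_N) : bool :=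
  [exists w, Hset w && prefersR v n w].

Definition N_F N (v : utility_profile N) : nat := #|[set n | friendly v n]|.
Definition N_U N (v : utility_profile N) : nat := #|[set n | unfriendly v n]|.

End Voting.

(* Since v_n(.,A) increases and v_n(.,R) decreases, an agent preferring A in
   some state prefers A in every later state.  Hence every friendly agent
   prefers A in the largest state w_L of L, and every unfriendly agent prefers
   R in the smallest state w_H of H.  So N_F <= N - floor(alpha^R_{w_L} N)
   < alpha^A_{w_L} N + 1, which is below mu N once N > 1/(mu - alpha^A_{w_L}),
   and N_U <= floor(alpha^R_{w_H} N) <= (1 - alpha^A_{w_H}) N < (1 - mu) N. *)
From mathcomp Require Import all_boot all_order all_algebra.
From mathcomp Require Import reals.
From mathcomp Require Import lra.
Set Implicit Arguments. Unset Strict Implicit. Unset Printing Implicit Defensive.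
Import Order.TTheory GRing.Theory Num.Theory.
Local Open Scope ring_scope.

Lemma ord_pred_max n (P : pred 'I_n) :
  (exists w, P w) -> exists2 w, P w & forall w', P w' -> (w' <= w)%N.
Proof. by case=> w0 /(arg_maxnP val) [w Pw maxw]; exists w. Qed.

Lemma ord_pred_min n (P : pred 'I_n) :
  (exists w, P w) -> exists2 w, P w & forall w', P w' -> (w <= w')%N.
Proof. by case=> w0 /(arg_minnP val) [w Pw minw]; exists w. Qed.

Lemma archi_mul_nat_gt1 (R : archiRealFieldType) (eps : R) : 0 < eps ->
  exists2 N0 : nat, (0 < N0)%N & forall N : nat, (N0 < N)%N -> 1 < eps * N%:R.
Proof.
move=> eps_gt0; exists (Num.Def.archi_bound eps^-1).+1 => // N ltN0N.
have lt_inv_N : eps^-1 < N%:R.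
  have inv_ge0 : 0 <= eps^-1 by rewrite invr_ge0 ltW.
  rewrite (lt_trans (archi_boundP inv_ge0)) //.
  by rewrite ltr_nat; apply: ltnW.
by rewrite -ltr_pdivrMl // mulr1.
Qed.

Lemma floor_complement_lt (R : archiRealDomainType) (a : R) (N : nat) :
  (N%:Z - Num.floor ((1 - a) * N%:R))%:~R < a * N%:R + 1.
Proof.
have := floorD1_gt ((1 - a) * N%:R).
by rewrite intrB intrD /= -pmulrn; lra.
Qed.

Section Instance.
Variables (R : realType) (W : nat) (alphaA : 'I_W -> R) (mu : R).
Variables (N : nat) (v : utility_profile R W N).
Hypothesis hv : valid_instance alphaA v.

Lemma prefersA_monotone n (w1 w2 : 'I_W) :
  (w1 <= w2)%N -> prefersA v n w1 -> prefersA v n w2.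
Proof.
case: hv => incA decR _ _ _; rewrite leq_eqVlt => /orP[/eqP/val_inj-> // | lt12].
by move=> pA1; apply: lt_trans (decR n _ _ lt12) (lt_trans pA1 (incA n _ _ lt12)).
Qed.

Lemma prefersR_antitone n (w1 w2 : 'I_W) :
  (w1 <= w2)%N -> prefersR v n w2 -> prefersR v n w1.
Proof.
case: hv => incA decR _ _ _; rewrite leq_eqVlt => /orP[/eqP/val_inj-> // | lt12].
by move=> pR2; apply: lt_trans (incA n _ _ lt12) (lt_trans pR2 (decR n _ _ lt12)).
Qed.

Lemma card_prefersA w : #|[set n | prefersA v n w]|%:R =
  (N%:Z - Num.floor (alphaR alphaA w * N%:R))%:~R :> R.
Proof. by case: hv => _ _ _ _ cardA; rewrite -cardA. Qed.

Lemma card_prefersR w : #|[set n | prefersR v n w]|%:R =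
  (Num.floor (alphaR alphaA w * N%:R))%:~R :> R.
Proof. by case: hv => _ _ _ cardR _; rewrite -cardR. Qed.

Lemma N_F_le_prefersA (wL : 'I_W) :
  (forall w, Lset alphaA mu w -> (w <= wL)%N) ->
  (N_F alphaA mu v <= #|[set n | prefersA v n wL]|)%N.
Proof.
move=> maxL; apply/subset_leq_card/subsetP => n; rewrite !inE.
by case/existsP=> w /andP[Lw]; apply: prefersA_monotone (maxL w Lw).
Qed.

Lemma N_U_le_prefersR (wH : 'I_W) :
  (forall w, Hset alphaA mu w -> (wH <= w)%N) ->
  (N_U alphaA mu v <= #|[set n | prefersR v n wH]|)%N.
Proof.
move=> minH; apply/subset_leq_card/subsetP => n; rewrite !inE.
by case/existsP=> w /andP[Hw]; apply: prefersR_antitone (minH w Hw).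
Qed.

Lemma friendly_fraction_lt (wL : 'I_W) :
  (forall w, Lset alphaA mu w -> (w <= wL)%N) ->
  1 < (mu - alphaA wL) * N%:R -> (N_F alphaA mu v)%:R / N%:R < mu.
Proof.
move=> maxL gap; have N_gt0 : 0 < N%:R :> R.
  by rewrite ltr0n lt0n; apply: contraTneq gap => ->; rewrite mulr0 ltr10.
have le_card : (N_F alphaA mu v)%:R <= #|[set n | prefersA v n wL]|%:R :> R.
  by rewrite ler_nat N_F_le_prefersA.
rewrite ltr_pdivrMr //; apply: le_lt_trans le_card _.
rewrite card_prefersA /alphaR.
by apply: lt_le_trans (floor_complement_lt _ _) _; lra.
Qed.

Lemma unfriendly_fraction_lt (wH : 'I_W) :
  Hset alphaA mu wH -> (forall w, Hset alphaA mu w -> (wH <= w)%N) ->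
  (0 < N)%N -> (N_U alphaA mu v)%:R / N%:R < 1 - mu.
Proof.
rewrite /Hset => Hw minH N_gt0.
have le_card : (N_U alphaA mu v)%:R <= #|[set n | prefersR v n wH]|%:R :> R.
  by rewrite ler_nat N_U_le_prefersR.
rewrite ltr_pdivrMr ?ltr0n //; apply: le_lt_trans le_card _.
rewrite card_prefersR; apply: le_lt_trans (floor_le _) _.
by rewrite /alphaR ltr_pM2r ?ltr0n //; lra.
Qed.

End Instance.

Theorem proposition1 (R : realType) (W : nat) (alphaA : 'I_W -> R) (mu : R)
  (hmu : 0 < mu < 1)
  (hneq : forall w, alphaA w != mu)
  (hL : exists w, Lset alphaA mu w)
  (hH : exists w, Hset alphaA mu w)
  (v : forall N : nat, utility_profile R W N)
  (hv : forall N : nat, valid_instance alphaA (v N)) :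
  exists Nmu : nat, (0 < Nmu)%N /\
    forall N : nat, (Nmu < N)%N ->
      (N_F alphaA mu (v N))%:R / N%:R < mu /\
      (N_U alphaA mu (v N))%:R / N%:R < 1 - mu.
Proof.
have [wL Lw maxL] := ord_pred_max hL.
have [wH Hw minH] := ord_pred_min hH.
have gap_gt0 : 0 < mu - alphaA wL by rewrite subr_gt0.
have [Nmu Nmu_gt0 gap] := archi_mul_nat_gt1 gap_gt0.
exists Nmu; split=> // N ltNmuN; split.
- exact (friendly_fraction_lt (hv N) maxL (gap N ltNmuN)).
- exact (unfriendly_fraction_lt (hv N) Hw minH (ltn_trans Nmu_gt0 ltNmuN)).
Qed.
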